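(* Let $\mathcal{N}$ (from $X$, $|X|=m$, to $Y$, $|Y|=n$) and $\mathcal{M}$ (from $X'$, $|X'|=m'$, to $Y$) be classical channels whose columns $\mathbf{p}_x=\mathcal{N}(\mathbf{e}_x)$, $x\in[m]$, and $\mathbf{q}_w=\mathcal{M}(\mathbf{e}_w)$, $w\in[m']$, all have entries in non-increasing order (e.g. both channels are in standard form). The following are equivalent: (1) $\mathcal{N}\succ\mathcal{M}$; (2) $\mathrm{Conv}(\mathcal{N})\succ\mathrm{Conv}(\mathcal{M})$ as sets; (3) there is an $m\times m'$ column-stochastic matrix $S=(s_{x|w})$ with $\sum_{x\in[m]}s_{x|w}\mathbf{p}_x\succ\mathbf{q}_w$ for all $w\in[m']$; (4) for all $\mathbf{s}\in\mathrm{Prob}^{\downarrow}(n)$, $\max_{x\in[m]}\mathbf{s}\cdot\mathbf{p}_x\ge\max_{w\in[m']}\mathbf{s}\cdot\mathbf{q}_w$; (5) for all $\mathbf{t}\in\mathrm{Prob}(n)$ and all $w\in[m']$, $\max_{x\in[m]}\sum_{k\in[n]}t_k\frac{\|\mathbf{p}_x\|_{(k)}}{\|\mathbf{q}_w\|_{(k)}}\ge1$.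
   Context: A classical channel is given by a column-stochastic transition matrix; $\mathbf{e}_x$ are standard basis vectors. For $\mathbf{p}\in\mathrm{Prob}(n)$, $\|\mathbf{p}\|_{(k)}$ is the sum of its $k$ largest entries; $\mathbf{p}\succ\mathbf{q}$ means $\|\mathbf{p}\|_{(k)}\ge\|\mathbf{q}\|_{(k)}$ for all $k\in[n]$. $\mathrm{Prob}^{\downarrow}(n)$ is the set of probability vectors with non-increasing entries. $\mathrm{Conv}(\mathcal{N})$ and $\mathrm{Conv}(\mathcal{M})$ are the convex hulls of $\{\mathbf{p}_x\}$ and $\{\mathbf{q}_w\}$. For sets $\mathfrak{K}_1,\mathfrak{K}_2\subseteq\mathrm{Prob}(n)$, $\mathfrak{K}_1\succ\mathfrak{K}_2$ means every $\mathbf{q}\in\mathfrak{K}_2$ is majorized by some $\mathbf{p}\in\mathfrak{K}_1$. Classical channel majorization $\mathcal{N}\succ\mathcal{M}$: there is a random permutation superchannel $\Theta$ with $\mathcal{M}=\Theta[\mathcal{N}]$, i.e. $\Theta[\mathcal{N}]=\mathcal{D}^{YZ\to Y}\circ(\mathcal{N}\otimes\mathrm{id}^Z)\circ\mathcal{S}^{X'\to XZ}$ for a finite classical system $Z$, classical channels $\mathcal{S},\mathcal{D}$, with $\mathcal{D}(\cdot\otimes\mathbf{e}_z)$ doubly stochastic for every $z$. *)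

From HB Require Import structures.
From mathcomp Require Import all_boot all_order all_algebra.
From mathcomp Require Import reals.
Set Implicit Arguments. Unset Strict Implicit. Unset Printing Implicit Defensive.
Import Order.TTheory GRing.Theory Num.Theory.
Local Open Scope ring_scope.

(* A classical channel from X to Y is represented by its transition
   matrix N, with N x y = entry (y, x) = probability of output y on input x.
   Column x of the transition matrix is the vector N x = N(e_x). *)

Definition is_prob (R : realType) (T : finType) (p : T -> R) : Prop :=
  (forall i, 0 <= p i) /\ \sum_(i : T) p i = 1.

Definition is_channel (R : realType) (X Y : finType) (N : X -> Y -> R) : Prop :=
  forall x, is_prob (N x).

(* doubly stochastic square matrix A (A y y' = entry (y', y)) *)
Definition doubly_stochastic (R : realType) (Y : finType) (A : Y -> Y -> R) : Prop :=
  is_channel A /\ (forall y', \sum_(y : Y) A y y' = 1).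

Definition nonincreasing (R : realType) (n : nat) (p : 'I_n -> R) : Prop :=
  forall i j : 'I_n, (i <= j)%N -> p j <= p i.

Definition is_prob_dec (R : realType) (n : nat) (s : 'I_n -> R) : Prop :=
  is_prob s /\ nonincreasing s.

Definition kfnorm (R : realType) (n : nat) (p : 'I_n -> R) (k : nat) : R :=
  \sum_(a <- take k (sort (fun u v : R => v <= u) [seq p i | i <- enum 'I_n])) a.

Definition majorizes (R : realType) (n : nat) (p q : 'I_n -> R) : Prop :=
  forall k : nat, (1 <= k <= n)%N -> kfnorm q k <= kfnorm p k.

Definition conv_hull (R : realType) (X : finType) (n : nat) (N : X -> 'I_n -> R)
  (p : 'I_n -> R) : Prop :=
  exists a : X -> R, is_prob a /\ forall y, p y = \sum_(x : X) a x * N x y.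

Definition set_majorizes (R : realType) (n : nat) (K1 K2 : ('I_n -> R) -> Prop) : Prop :=
  forall q, K2 q -> exists p, K1 p /\ majorizes p q.

(* channel majorization N > M: M = Theta[N] for a random permutation superchannel,
   Theta[N] = D o (N (x) id_Z) o S, with D( . (x) e_z) doubly stochastic. *)
Definition channel_majorizes (R : realType) (X X' Y : finType)
  (N : X -> Y -> R) (M : X' -> Y -> R) : Prop :=
  exists (Z : finType) (S : X' -> (X * Z)%type -> R) (D : (Y * Z)%type -> Y -> R),
    [/\ is_channel S, is_channel D,
        (forall z : Z, doubly_stochastic (fun y y' => D (y, z) y')) &
        (forall (w : X') (y' : Y),
           M w y' = \sum_(xz : X * Z) S w xz * \sum_(y : Y) N xz.1 y * D (y, xz.2) y')].

Definition dotv (R : realType) (n : nat) (s p : 'I_n -> R) : R :=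
  \sum_(i < n) s i * p i.

From HB Require Import structures.
From mathcomp Require Import all_boot all_order all_algebra all_fingroup.
From mathcomp Require Import reals ring lra.
Import Order.TTheory GRing.Theory Num.Theory.
Local Open Scope ring_scope.
Set Implicit Arguments. Unset Strict Implicit. Unset Printing Implicit Defensive.

(* Once the columns are sorted, Ky Fan norms are prefix sums, and every
   condition becomes a statement about prefix sums of mixtures of columns.
   (1) -> (3): a doubly stochastic matrix can only lower the prefix sums of a
   sorted vector.  (3) -> (1): by Rado's theorem a sorted vector majorized by
   another is a mixture of its permutations, which yields a random permutation
   superchannel.  (2) <-> (3) column by column, and by linearity for mixtures.
   (3) -> (4) is Abel summation; (4) -> (5) tests (4) on the tail sums of
   t k / ||q_w||_(k+1); (5) -> (3) is Ville's theorem of the alternative for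
   the ratios ||p_x||_(k) / ||q_w||_(k) - 1, itself proved by Fourier-Motzkin
   elimination. *)

Section PrefixSums.
Context {R : realType}.

Definition prefix_sum n (p : 'I_n -> R) (k : nat) : R := \sum_(i < n | (i < k)%N) p i.

Definition zero_ext n (f : 'I_n -> R) (i : nat) : R :=
  if @insub nat (fun i => (i < n)%N) 'I_n i is Some j then f j else 0.

Lemma zero_extE n (f : 'I_n -> R) i (lt_in : (i < n)%N) : zero_ext f i = f (Ordinal lt_in).
Proof.
rewrite /zero_ext; case: insubP => [j _ ji|]; last by rewrite lt_in.
by congr f; apply: val_inj; rewrite /= ji.
Qed.

Lemma zero_ext_ord n (f : 'I_n -> R) (i : 'I_n) : zero_ext f i = f i.
Proof. by rewrite /zero_ext valK. Qed.

Lemma prefix_sum_zero_ext n (f : 'I_n -> R) k :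
  (k <= n)%N -> prefix_sum f k = \sum_(i < k) zero_ext f i.
Proof.
move=> le_kn; rewrite (big_ord_widen _ _ le_kn) /prefix_sum.
by apply: eq_bigr => i _; rewrite zero_ext_ord.
Qed.

Lemma prefix_sum0 n (p : 'I_n -> R) : prefix_sum p 0 = 0.
Proof. by rewrite /prefix_sum big_pred0. Qed.

Lemma prefix_sum1 n k : (k <= n)%N -> prefix_sum (fun _ : 'I_n => (1 : R)) k = k%:R.
Proof.
move=> le_kn; rewrite prefix_sum_zero_ext // (eq_bigr (fun _ => 1)).
  by rewrite sumr_const card_ord.
by move=> i _; rewrite (zero_extE _ (leq_trans (ltn_ord i) le_kn)).
Qed.

Lemma prefix_sum_le_sum n (p : 'I_n -> R) k :
  (forall i, 0 <= p i) -> prefix_sum p k <= \sum_i p i.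
Proof.
by move=> p_ge0; rewrite /prefix_sum big_mkcond; apply: ler_sum => i _; case: ifP.
Qed.

Lemma prefix_sum_mix (I : finType) n (a : I -> R) (f : I -> 'I_n -> R) k :
  prefix_sum (fun y => \sum_x a x * f x y) k = \sum_x a x * prefix_sum (f x) k.
Proof.
by rewrite /prefix_sum exchange_big; apply: eq_bigr => x _; rewrite mulr_sumr.
Qed.

Lemma nonincreasing_mix (I : finType) n (a : I -> R) (f : I -> 'I_n -> R) :
  (forall x, 0 <= a x) -> (forall x, nonincreasing (f x)) ->
  nonincreasing (fun y => \sum_x a x * f x y).
Proof.
move=> a_ge0 f_dec i j le_ij; apply: ler_sum => x _.
by apply: ler_wpM2l => //; apply: f_dec.
Qed.

Lemma kfnorm_nonincreasing n (p : 'I_n -> R) k :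
  nonincreasing p -> kfnorm p k = prefix_sum p k.
Proof.
move=> p_dec; rewrite /kfnorm.
have p_sorted : sorted (fun u v : R => v <= u) [seq p i | i <- enum 'I_n].
  rewrite sorted_map; apply: (@sub_sorted _ (relpre val leq)) => [i j /=|].
    exact: p_dec.
  by rewrite -sorted_map val_enum_ord; apply: iota_sorted.
rewrite sorted_sort //; last by move=> a b c h1 h2; apply: le_trans h2 h1.
rewrite -map_take big_map.
transitivity (\sum_(i <- take k (enum 'I_n)) zero_ext p (val i)).
  by apply: eq_bigr => i _; rewrite zero_ext_ord.
rewrite -(big_map val xpredT) map_take val_enum_ord take_iota.
have -> : iota 0 (minn k n) = index_iota 0 (minn k n) by rewrite /index_iota subn0.
rewrite big_mkord.
rewrite (big_ord_widen _ _ (geq_minr k n)) /prefix_sum.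
apply: eq_big => [i|i _]; first by rewrite leq_min ltn_ord andbT.
by rewrite zero_ext_ord.
Qed.

Lemma majorizesP n (p q : 'I_n -> R) : nonincreasing p -> nonincreasing q ->
  majorizes p q <-> forall k, (k <= n)%N -> prefix_sum q k <= prefix_sum p k.
Proof.
move=> p_dec q_dec; split => [pq [|k] le_kn|pq k /andP [_ le_kn]].
- by rewrite !prefix_sum0.
- by rewrite -!kfnorm_nonincreasing //; apply: pq; rewrite le_kn.
- by rewrite !kfnorm_nonincreasing //; apply: pq.
Qed.

Lemma prefix_sum_prob_gt0 n (q : 'I_n -> R) k :
  is_prob q -> nonincreasing q -> (0 < k)%N -> 0 < prefix_sum q k.
Proof.
case: n q => [|n] q [q_ge0 q_sum1] q_dec k_gt0.
  by move: q_sum1; rewrite big_ord0 => /eqP; rewrite eq_sym oner_eq0.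
have q0_gt0 : 0 < q ord0.
  rewrite ltNge; apply/negP => q0_le0.
  have : \sum_i q i <= \sum_(i < n.+1) q ord0 by apply: ler_sum => i _; apply: q_dec.
  by rewrite q_sum1 sumr_const card_ord => /le_trans/(_ (mulrn_wle0 _ q0_le0)); rewrite ler10.
rewrite /prefix_sum (bigD1 ord0) //=; apply: lt_le_trans q0_gt0 _.
by rewrite lerDl; apply: sumr_ge0.
Qed.

(* Bathtub principle: subtracting t := p k from every entry, each term
   c i * (p i - t) is at most (p i - t) for i < k and at most 0 for i >= k. *)
Lemma weighted_sum_le_prefix_sum n (p c : 'I_n -> R) k :
  nonincreasing p -> (forall i, 0 <= p i) -> (forall i, 0 <= c i <= 1) ->
  \sum_i c i <= k%:R -> \sum_i c i * p i <= prefix_sum p k.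
Proof.
move=> p_dec p_ge0 c01 c_sum; case: (ltnP k n) => [lt_kn|le_nk]; last first.
  rewrite /prefix_sum; under [X in _ <= X]eq_bigl => i do rewrite (leq_trans (ltn_ord i) le_nk).
  by apply: ler_sum => i _; have /andP [c0 c1] := c01 i; apply: ler_piMl.
set t := p (Ordinal lt_kn); have t_ge0 : 0 <= t := p_ge0 _.
have shift : \sum_i c i * p i = \sum_i c i * (p i - t) + t * \sum_i c i.
  by rewrite mulr_sumr -big_split; apply: eq_bigr => i _ /=; ring.
have prefix_shift : prefix_sum (fun i => p i - t) k = prefix_sum p k - k%:R * t.
  rewrite /prefix_sum sumrB -(big_ord_widen n (fun _ => t) (ltnW lt_kn)).
  by rewrite sumr_const card_ord mulr_natl.
have shifted_le : \sum_i c i * (p i - t) <= prefix_sum p k - k%:R * t.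
  rewrite -prefix_shift /prefix_sum [X in _ <= X]big_mkcond; apply: ler_sum => i _.
  have /andP [c0 c1] := c01 i; case: ifP => lt_ik.
    by apply: ler_piMl => //; rewrite subr_ge0; apply: p_dec; apply: ltnW.
  by apply: mulr_ge0_le0 => //; rewrite subr_le0; apply: p_dec; rewrite /= leqNgt lt_ik.
rewrite shift; apply: le_trans (lerD shifted_le (ler_wpM2l t_ge0 c_sum)) _.
by rewrite mulrC subrK.
Qed.

Lemma abel_summation (s d : nat -> R) n :
  \sum_(i < n.+1) s i * d i =
  s n * \sum_(i < n.+1) d i + \sum_(i < n) (s i - s i.+1) * \sum_(j < i.+1) d j.
Proof.
elim: n => [|n IHn]; first by rewrite !big_ord1 big_ord0 addr0.
rewrite big_ord_recr /= IHn (big_ord_recr n.+1 (fun i : 'I_n.+2 => d i)) /=.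
by rewrite (big_ord_recr n (fun i : 'I_n.+1 => (s i - s i.+1) * \sum_(j < i.+1) d j)) /=; ring.
Qed.

Lemma abel_sum_ge0 (s d : nat -> R) n :
  (forall i, (i < n)%N -> 0 <= s i) -> (forall i, (i.+1 < n)%N -> s i.+1 <= s i) ->
  (forall k, (k <= n)%N -> 0 <= \sum_(i < k) d i) ->
  0 <= \sum_(i < n) s i * d i.
Proof.
case: n => [|n] s_ge0 s_dec d_ge0; first by rewrite big_ord0.
rewrite abel_summation; apply: addr_ge0; first by apply: mulr_ge0; [apply: s_ge0|apply: d_ge0].
apply: sumr_ge0 => i _; apply: mulr_ge0; first by rewrite subr_ge0; apply: s_dec; rewrite ltnS.
by apply: d_ge0; rewrite ltnS ltnW.
Qed.

Lemma dot_le_of_prefix_sum_le n (s u v : 'I_n -> R) :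
  nonincreasing s -> (forall i, 0 <= s i) ->
  (forall k, (k <= n)%N -> prefix_sum u k <= prefix_sum v k) ->
  \sum_i s i * u i <= \sum_i s i * v i.
Proof.
move=> s_dec s_ge0 le_uv; rewrite -subr_ge0 -sumrB.
have -> : \sum_i (s i * v i - s i * u i) =
    \sum_(i < n) zero_ext s i * zero_ext (fun j => v j - u j) i.
  by apply: eq_bigr => i _; rewrite !zero_ext_ord mulrBr.
apply: abel_sum_ge0 => [i lt_in|i lt_in|k le_kn].
- by rewrite zero_extE.
- by rewrite (zero_extE _ lt_in) (zero_extE _ (ltnW lt_in)); apply: s_dec => /=.
- by rewrite -prefix_sum_zero_ext // /prefix_sum sumrB subr_ge0; apply: le_uv.
Qed.

Lemma tail_sum_nonincreasing n (r : 'I_n -> R) :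
  (forall j, 0 <= r j) -> nonincreasing (fun i : 'I_n => \sum_(j : 'I_n | (i <= j)%N) r j).
Proof.
move=> r_ge0 i i' le_ii'; rewrite [X in X <= _]big_mkcond [X in _ <= X]big_mkcond.
apply: ler_sum => j _; case: ifP => le_i'j; first by rewrite (leq_trans le_ii' le_i'j).
by case: ifP.
Qed.

Lemma dotv_tail_sum n (r p : 'I_n -> R) :
  dotv (fun i : 'I_n => \sum_(j : 'I_n | (i <= j)%N) r j) p = \sum_j r j * prefix_sum p j.+1.
Proof.
rewrite /dotv; under eq_bigr do rewrite mulr_suml big_mkcond /=.
rewrite exchange_big /=; apply: eq_bigr => j _.
rewrite /prefix_sum mulr_sumr [RHS]big_mkcond; apply: eq_bigr => i _.
by rewrite ltnS; case: ifP.
Qed.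

End PrefixSums.

Section Ville.
Context {R : realType}.

Definition delta (Z : finType) (z : Z) : Z -> R := fun z' => (z' == z)%:R.

Lemma sum_delta (Z : finType) (z : Z) (f : Z -> R) : \sum_z' delta z z' * f z' = f z.
Proof.
rewrite (bigD1 z) //= /delta eqxx mul1r big1 ?addr0 // => z' /negPf ->.
by rewrite mul0r.
Qed.

Lemma delta_prob (Z : finType) (z : Z) : is_prob (delta z).
Proof.
split=> [z'|]; first by rewrite /delta ler0n.
by rewrite -[RHS](sum_delta z (fun _ => 1)); apply: eq_bigr => *; rewrite mulr1.
Qed.

Lemma dot_mix (C Z : finType) (l : C -> R) (om : C -> Z -> R) (f : Z -> R) :
  \sum_z (\sum_c l c * om c z) * f z = \sum_c l c * \sum_z om c z * f z.
Proof.
under eq_bigr do rewrite mulr_suml.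
rewrite exchange_big; apply: eq_bigr => c _; rewrite mulr_sumr.
by apply: eq_bigr => z _; rewrite mulrA.
Qed.

Lemma is_prob_mix (C Z : finType) (l : C -> R) (om : C -> Z -> R) :
  is_prob l -> (forall c, is_prob (om c)) -> is_prob (fun z => \sum_c l c * om c z).
Proof.
move=> [l_ge0 l_sum1] om_prob; split=> [z|].
  by apply: sumr_ge0 => c _; apply: mulr_ge0 => //; case: (om_prob c).
rewrite exchange_big /= -l_sum1; apply: eq_bigr => c _.
by rewrite -mulr_sumr (proj2 (om_prob c)) mulr1.
Qed.

Lemma normalize_prob (Z : finType) (v : Z -> R) :
  (forall z, 0 <= v z) -> 0 < \sum_z v z -> is_prob (fun z => v z / \sum_z' v z').
Proof.
move=> v_ge0 v_gt0; split=> [z|]; first by apply: divr_ge0 => //; apply: ltW.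
by rewrite -mulr_suml divff // lt0r_neq0.
Qed.

(* The threshold lies between the lower bounds g z / - al z (al z < 0) and
   the upper bounds - g z / al z (al z > 0); the pair condition says that
   every lower bound is below every upper bound. *)
Lemma fourier_motzkin_threshold (Z : finType) (al g : Z -> R) :
  (forall z, 0 <= al z -> g z < 0) ->
  (forall p q, 0 <= al p -> al q < 0 -> - al q * g p + al p * g q < 0) ->
  exists2 tau, 0 <= tau & forall z, g z + tau * al z < 0.
Proof.
move=> g_lt0 pair_lt0.
pose L := \big[Num.max/0]_(z | al z < 0) (g z / - al z).
pose H := \big[Num.min/(L + 1)]_(z | 0 < al z) (- g z / al z).
have L_ge0 : 0 <= L by apply: bigmax_ge_id.
have LH : L < H.
  apply: lt_bigmin => [|p al_p]; first by rewrite ltrDl.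
  apply: bigmax_lt => [|q al_q].
    by apply: divr_gt0 => //; rewrite oppr_gt0; apply: g_lt0; apply: ltW.
  rewrite ltr_pdivrMr ?oppr_gt0 // mulrC mulrA ltr_pdivlMr //.
  by have := pair_lt0 p q (ltW al_p) al_q; lra.
exists ((L + H) / 2) => [|z]; first lra.
case: (ltrgtP (al z) 0) => al_z.
- have : g z / - al z <= L by apply: le_bigmax_cond.
  by rewrite ler_pdivrMr ?oppr_gt0 //; nra.
- have : H <= - g z / al z by apply: bigmin_le_cond.
  by rewrite ler_pdivlMr //; nra.
- by rewrite al_z mulr0 addr0; apply: g_lt0; rewrite al_z.
Qed.

Section ConeGenerators.
Variables (Z : finType) (al : Z -> R) (z1 : Z).
Hypothesis al_z1 : 0 <= al z1.

Definition pair_gen (p q : Z) : Z -> R :=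
  fun z => (- al q * delta p z + al p * delta q z) / (al p - al q).

(* The cone [l >= 0, al . l >= 0] is generated by the delta z with al z >= 0
   and the pair_gen p q with al q < 0 <= al p; invalid indices are sent to
   delta z1, which lies in the cone since al z1 >= 0. *)
Definition cone_gen (c : Z + Z * Z) : Z -> R :=
  match c with
  | inl z => if 0 <= al z then delta z else delta z1
  | inr (p, q) => if (0 <= al p) && (al q < 0) then pair_gen p q else delta z1
  end.

Lemma sum_pair_gen p q (f : Z -> R) :
  \sum_z pair_gen p q z * f z = (- al q * f p + al p * f q) / (al p - al q).
Proof.
rewrite mulrDl -(sum_delta p (fun z => - al q * f z / (al p - al q))).
rewrite -(sum_delta q (fun z => al p * f z / (al p - al q))) -big_split.
by apply: eq_bigr => z _ /=; rewrite /pair_gen; ring.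
Qed.

Lemma cone_gen_prob c : is_prob (cone_gen c).
Proof.
case: c => [z|[p q]] /=; first by case: ifP => _; apply: delta_prob.
case: ifP => [/andP [al_p al_q]|_]; last exact: delta_prob.
have gap : 0 < al p - al q by lra.
split=> [z|].
  apply: divr_ge0; last exact: ltW.
  by apply: addr_ge0; apply: mulr_ge0; rewrite /delta ?ler0n // oppr_ge0 ltW.
under eq_bigr do rewrite -[pair_gen _ _ _]mulr1.
by rewrite sum_pair_gen !mulr1 addrC divff // lt0r_neq0.
Qed.

Lemma cone_gen_al c : 0 <= \sum_z cone_gen c z * al z.
Proof.
case: c => [z|[p q]] /=; first by case: ifP => al_z; rewrite sum_delta.
case: ifP => _; last by rewrite sum_delta.
rewrite sum_pair_gen.
by rewrite (_ : - al q * al p + al p * al q = 0) ?mul0r //; ring.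
Qed.

Lemma cone_gen_lt0 (g : Z -> R) : (forall c, \sum_z cone_gen c z * g z < 0) ->
  (forall z, 0 <= al z -> g z < 0) /\
  (forall p q, 0 <= al p -> al q < 0 -> - al q * g p + al p * g q < 0).
Proof.
move=> g_lt0; split=> [z al_z|p q al_p al_q].
  by have := g_lt0 (inl z); rewrite /= al_z sum_delta.
have := g_lt0 (inr (p, q)); rewrite /= al_p al_q sum_pair_gen.
by rewrite pmulr_llt0 // invr_gt0; lra.
Qed.

End ConeGenerators.

(* Fourier-Motzkin elimination of the last row: the cone generators turn the
   last constraint into the columns of a system with one row less. *)
Lemma ville_alternative k (Z : finType) (a : 'I_k -> Z -> R) (z0 : Z) :
  (exists2 l : Z -> R, is_prob l & forall i, 0 <= \sum_z l z * a i z) \/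
  (exists2 t : 'I_k -> R, is_prob t & forall z, \sum_i t i * a i z < 0).
Proof.
elim: k Z a z0 => [|k IHk] Z a z0.
  by left; exists (delta z0); [exact: delta_prob | case].
pose al := a ord_max; pose a' i := a (lift ord_max i).
have [al_lt0|[z1 al_z1]] : (forall z, al z < 0) \/ (exists z, 0 <= al z).
  case: (boolP [exists z, 0 <= al z]) => [/existsP|/existsPn al_lt0]; first by right.
  by left=> z; rewrite ltNge al_lt0.
  right; exists (delta ord_max) => [|z]; first exact: delta_prob.
  by rewrite sum_delta.
pose b i c := \sum_z cone_gen al z1 c z * a' i z.
have [[l l_prob l_ge0]|[t' t'_prob t'_lt0]] := IHk _ b (inl z1).
  left; exists (fun z => \sum_c l c * cone_gen al z1 c z).
    exact: is_prob_mix l_prob (cone_gen_prob al z1).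
  move=> i; rewrite dot_mix; case: (unliftP ord_max i) => [j ->|->]; first exact: l_ge0.
  by apply: sumr_ge0 => c _; apply: mulr_ge0; [case: l_prob | exact: cone_gen_al].
pose g z := \sum_j t' j * a' j z.
have cone_g c : \sum_z cone_gen al z1 c z * g z < 0.
  have -> : \sum_z cone_gen al z1 c z * g z = \sum_j t' j * b j c.
    under eq_bigr do rewrite mulrC; rewrite dot_mix.
    by apply: eq_bigr => j _; congr (_ * _); apply: eq_bigr => z _; rewrite mulrC.
  exact: t'_lt0.
have [g_lt0 pair_lt0] := cone_gen_lt0 cone_g.
have [tau tau_ge0 tau_sep] := fourier_motzkin_threshold g_lt0 pair_lt0.
pose v i := if unlift ord_max i is Some j then t' j else tau.
have v_sum : \sum_i v i = 1 + tau.
  rewrite (bigD1_ord ord_max) //= /v unlift_none addrC.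
  by under eq_bigr do rewrite liftK; case: t'_prob => _ ->.
right; exists (fun i => v i / \sum_i' v i').
  apply: normalize_prob => [i|]; last by rewrite v_sum; lra.
  by rewrite /v; case: unlift => [j|//]; case: t'_prob.
move=> z; under eq_bigr do rewrite mulrAC.
rewrite -mulr_suml pmulr_llt0 ?v_sum ?invr_gt0; last lra.
rewrite (bigD1_ord ord_max) //= /v unlift_none addrC.
by under eq_bigr do rewrite liftK; apply: tau_sep.
Qed.

End Ville.

Section Rado.
Context {R : realType}.

(* A maximizer of sum_i t (s i) * (- i) is sorted: swapping an inversion
   would increase it. *)
Lemma exists_sorting_perm n (t : 'I_n -> R) :
  exists pi : {perm 'I_n}, nonincreasing (fun i => t (pi i)).
Proof.
pose F (s : {perm 'I_n}) := \sum_i t (s i) * - (i : nat)%:R.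
have [pi _ pi_max] := @arg_maxP _ _ _ (1%g : {perm 'I_n}) xpredT F isT.
exists pi => i j le_ij; rewrite leNgt; apply/negP => inv_ij.
have lt_ij : (i < j)%N.
  rewrite ltn_neqAle le_ij andbT; apply: contraTneq inv_ij => /ord_inj ->.
  by rewrite ltxx.
have neq_ij : i != j by rewrite neq_ltn lt_ij.
have := pi_max (tperm i j * pi)%g isT; rewrite /= leNgt -subr_gt0 => /negP; apply.
have -> : F (tperm i j * pi)%g - F pi = (t (pi j) - t (pi i)) * ((j : nat)%:R - (i : nat)%:R).
  rewrite /F -sumrB (bigD1 i) //= (bigD1 j) 1?eq_sym //=.
  rewrite big1 => [|x /andP [x_i x_j]]; last by rewrite permM tpermD ?subrr // eq_sym.
  by rewrite !permM tpermL tpermR; ring.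
apply: mulr_gt0; first by rewrite subr_gt0.
by rewrite subr_gt0 ltr_nat.
Qed.

Lemma prefix_sum_le_sorted n (t : 'I_n -> R) (pi : {perm 'I_n}) k : (k <= n)%N ->
  nonincreasing (fun i => t (pi i)) -> (forall i, 0 <= t i) ->
  prefix_sum t k <= prefix_sum (fun i => t (pi i)) k.
Proof.
move=> le_kn t_dec t_ge0; pose c i : R := if (pi i < k)%N then 1 else 0.
have reindex (f : 'I_n -> R) : prefix_sum f k = \sum_i c i * f (pi i).
  rewrite /prefix_sum (reindex_inj (@perm_inj _ pi)) /= big_mkcond.
  by apply: eq_bigr => i _; rewrite /c; case: ifP; rewrite ?mul1r ?mul0r.
rewrite reindex; apply: weighted_sum_le_prefix_sum => // [i|].
  by rewrite /c; case: ifP; rewrite ?lexx ?ler01.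
have -> : \sum_i c i = prefix_sum (fun _ : 'I_n => 1) k.
  by rewrite reindex; under [RHS]eq_bigr do rewrite mulr1.
by rewrite prefix_sum1.
Qed.

(* Rado's theorem, through Ville's alternative: a separating t would satisfy
   t . (p o s) < t . q for every permutation s, which fails for the s sorting t. *)
Lemma rado_perm_mixture n (p q : 'I_n -> R) :
  nonincreasing p -> nonincreasing q -> (forall i, 0 <= q i) ->
  (forall k, (k <= n)%N -> prefix_sum q k <= prefix_sum p k) ->
  \sum_i q i = \sum_i p i ->
  exists2 l : {perm 'I_n} -> R, is_prob l & forall y, q y = \sum_s l s * p (s y).
Proof.
move=> p_dec q_dec q_ge0 qp sum_qp.
have [[l l_prob l_ge]|[t [t_ge0 t_sum1] t_lt]] :=
  ville_alternative (fun y (s : {perm 'I_n}) => p (s y) - q y) 1%g.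
  exists l => // y; pose d y := \sum_s l s * p (s y) - q y.
  have d_ge0 y' : 0 <= d y'.
    have := l_ge y'; under eq_bigr do rewrite mulrBr.
    by rewrite sumrB -mulr_suml (proj2 l_prob) mul1r.
  have d_sum : \sum_y' d y' = 0.
    have sum_perm (s : {perm 'I_n}) : \sum_y' p (s y') = \sum_y' p y'.
      by rewrite [RHS](reindex_inj (@perm_inj _ s)).
    rewrite /d sumrB exchange_big /= sum_qp.
    under eq_bigr => s _ do rewrite -mulr_sumr sum_perm.
    by rewrite -mulr_suml (proj2 l_prob) mul1r subrr.
  apply/eqP; rewrite eq_sym -subr_eq0; apply/eqP.
  exact: (psumr_eq0P (fun y' _ => d_ge0 y') d_sum).
have [pi pi_sorts] := exists_sorting_perm t.
exfalso; have := t_lt (pi^-1)%g; rewrite ltNge => /negP; apply.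
under eq_bigr do rewrite mulrBr.
rewrite sumrB subr_ge0.
have -> : \sum_y t y * p ((pi^-1)%g y) = \sum_i t (pi i) * p i.
  by rewrite (reindex_inj (@perm_inj _ pi)); apply: eq_bigr => i _; rewrite permK.
apply: le_trans (_ : \sum_i t (pi i) * q i <= _); last exact: dot_le_of_prefix_sum_le.
under eq_bigr do rewrite mulrC; under [X in _ <= X]eq_bigr do rewrite mulrC.
by apply: dot_le_of_prefix_sum_le => // k le_kn; apply: prefix_sum_le_sorted.
Qed.

End Rado.

Section Stochastic.
Context {R : realType}.

Lemma prefix_sum_doubly_stochastic_le n (p : 'I_n -> R) (A : 'I_n -> 'I_n -> R) k :
  (k <= n)%N -> nonincreasing p -> (forall i, 0 <= p i) -> doubly_stochastic A ->
  prefix_sum (fun y' => \sum_y p y * A y y') k <= prefix_sum p k.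
Proof.
move=> le_kn p_dec p_ge0 [A_ch A_row]; rewrite prefix_sum_mix.
under eq_bigr do rewrite mulrC.
apply: weighted_sum_le_prefix_sum => // [y|].
  have [A_ge0 A_sum1] := A_ch y.
  by rewrite sumr_ge0 //= -A_sum1 prefix_sum_le_sum.
rewrite /prefix_sum exchange_big /=; under eq_bigr do rewrite A_row.
by rewrite -/(prefix_sum (fun _ : 'I_n => 1) k) prefix_sum1.
Qed.

Lemma perm_doubly_stochastic n (s : {perm 'I_n}) :
  doubly_stochastic (fun y y' : 'I_n => ((s y' == y)%:R : R)).
Proof.
split=> [y|y']; last first.
  by rewrite -[RHS](proj2 (delta_prob (s y'))); apply: eq_bigr => y _; rewrite /delta eq_sym.
split=> [y'|]; first exact: ler0n.
rewrite -[RHS](proj2 (delta_prob ((s^-1)%g y))); apply: eq_bigr => y' _.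
by rewrite /delta (canF_eq (permK s)).
Qed.

Lemma prob_le1 (Z : finType) (p : Z -> R) z : is_prob p -> p z <= 1.
Proof.
by move=> [p_ge0 <-]; rewrite (bigD1 z) //= lerDl sumr_ge0.
Qed.

Lemma mean_le_bigmax (I : finType) (a f : I -> R) :
  is_prob a -> \sum_i a i * f i <= \big[Num.max/0]_i f i.
Proof.
move=> [a_ge0 a_sum1]; rewrite -[X in _ <= X]mul1r -a_sum1 mulr_suml.
by apply: ler_sum => i _; apply: ler_wpM2l => //; apply: le_bigmax.
Qed.

Lemma mulr_bigmax (I : finType) (f : I -> R) c : 0 <= c ->
  c * \big[Num.max/0]_i f i = \big[Num.max/0]_i (c * f i).
Proof.
move=> c_ge0; apply: (big_rec2 (fun a b => c * a = b)); first by rewrite mulr0.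
by move=> i a b _ <-; rewrite maxr_pMr.
Qed.

Lemma eq_majorizes n (p p' q q' : 'I_n -> R) :
  p =1 p' -> q =1 q' -> majorizes p q -> majorizes p' q'.
Proof.
by move=> eq_p eq_q pq k k_range; rewrite /kfnorm -(eq_map eq_p) -(eq_map eq_q); apply: pq.
Qed.

End Stochastic.

Section ChannelMajorization.
Context {R : realType} {m m' n : nat}.
Variables (N : 'I_m -> 'I_n -> R) (M : 'I_m' -> 'I_n -> R).
Hypotheses (N_ch : is_channel N) (M_ch : is_channel M).
Hypotheses (N_dec : forall x, nonincreasing (N x)) (M_dec : forall w, nonincreasing (M w)).

Definition mixture (a : 'I_m -> R) : 'I_n -> R := fun y => \sum_x a x * N x y.

Definition mixture_majorizes := exists S : 'I_m' -> 'I_m -> R,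
  is_channel S /\ forall w, majorizes (mixture (S w)) (M w).

Definition max_dot_dominates := forall s : 'I_n -> R, is_prob_dec s ->
  \big[Num.max/0]_w dotv s (M w) <= \big[Num.max/0]_x dotv s (N x).

Definition kfnorm_ratio_ge1 := forall (t : 'I_n -> R) w, is_prob t ->
  1 <= \big[Num.max/0]_x (\sum_k t k * (kfnorm (N x) k.+1 / kfnorm (M w) k.+1)).

Lemma mixture_nonincreasing a : (forall x, 0 <= a x) -> nonincreasing (mixture a).
Proof. by move=> a_ge0; apply: nonincreasing_mix. Qed.

Lemma kfnorm_mixture a k :
  (forall x, 0 <= a x) -> kfnorm (mixture a) k = \sum_x a x * kfnorm (N x) k.
Proof.
move=> a_ge0; rewrite (kfnorm_nonincreasing _ (mixture_nonincreasing a_ge0)).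
rewrite /mixture prefix_sum_mix.
by under [RHS]eq_bigr do rewrite (kfnorm_nonincreasing _ (N_dec _)).
Qed.

Lemma dotv_mixture s a : dotv s (mixture a) = \sum_x a x * dotv s (N x).
Proof.
rewrite /dotv /mixture; under eq_bigr do rewrite mulr_sumr.
rewrite exchange_big; apply: eq_bigr => x _; rewrite mulr_sumr.
by apply: eq_bigr => i _; rewrite mulrCA.
Qed.

Lemma mixture_majorizes_columnwise :
  (forall w, exists2 a, is_prob a & majorizes (mixture a) (M w)) -> mixture_majorizes.
Proof.
by move=> /fin_all_exists2 [S S_ch S_maj]; exists S.
Qed.

Lemma channel_majorizes_mixture : channel_majorizes N M -> mixture_majorizes.
Proof.
move=> [Z [S [D [S_ch _ D_ds M_eq]]]].
have S_ge0 w xz : 0 <= S w xz by case: (S_ch w).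
exists (fun w x => \sum_z S w (x, z)); split=> [w|w].
  split=> [x|]; first exact: sumr_ge0.
  by rewrite pair_big /= -[RHS](proj2 (S_ch w)); apply: eq_bigr => -[].
apply/majorizesP; [exact/mixture_nonincreasing/(fun x => sumr_ge0 _ _) | exact: M_dec |].
move=> k le_kn.
have -> : prefix_sum (M w) k =
    \sum_xz S w xz * prefix_sum (fun y' => \sum_y N xz.1 y * D (y, xz.2) y') k.
  by rewrite -prefix_sum_mix; apply: eq_bigr => y' _; rewrite M_eq.
rewrite /mixture prefix_sum_mix; under [X in _ <= X]eq_bigr do rewrite mulr_suml.
rewrite pair_bigA /=; apply: ler_sum => -[x z] _; apply: ler_wpM2l => //=.
by apply: prefix_sum_doubly_stochastic_le => //; case: (N_ch x).
Qed.

Lemma mixture_channel_majorizes : mixture_majorizes -> channel_majorizes N M.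
Proof.
move=> [S [S_ch S_maj]].
have perm_mix w : exists2 l : {perm 'I_n} -> R, is_prob l &
    forall y, M w y = \sum_s l s * mixture (S w) (s y).
  have S_ge0 x : 0 <= S w x by case: (S_ch w).
  apply: rado_perm_mixture; [exact: mixture_nonincreasing | exact: M_dec |
    by case: (M_ch w) | |].
    by apply/majorizesP; [exact: mixture_nonincreasing | exact: M_dec | exact: S_maj].
  by rewrite (proj2 (M_ch w)) (proj2 (is_prob_mix (S_ch w) N_ch)).
have /fin_all_exists2 [l l_prob M_eq] := perm_mix.
exists {perm 'I_n}, (fun w xs => S w xs.1 * l w xs.2),
  (fun (ys : 'I_n * {perm 'I_n}) y' => ((ys.2 y' == ys.1)%:R : R)); split.
- move=> w; split=> [[x s]|]; first by apply: mulr_ge0; [case: (S_ch w) | case: (l_prob w)].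
  rewrite -(pair_bigA _ (fun x s => S w x * l w s)) /=.
  under eq_bigr do rewrite -mulr_sumr (proj2 (l_prob w)) mulr1.
  exact: (proj2 (S_ch w)).
- by move=> [y s]; apply: (perm_doubly_stochastic s).1.
- by move=> s; apply: perm_doubly_stochastic.
move=> w y' /=.
rewrite -(pair_bigA _ (fun x s => S w x * l w s * \sum_y N x y * (s y' == y)%:R)).
rewrite M_eq exchange_big; apply: eq_bigr => s _.
rewrite /mixture mulr_sumr; apply: eq_bigr => x _.
rewrite -mulrA mulrCA; congr (_ * (_ * _)).
by rewrite -[LHS](sum_delta (s y')); apply: eq_bigr => y _; rewrite /delta eq_sym mulrC.
Qed.

Lemma set_majorizes_mixture :
  set_majorizes (conv_hull N) (conv_hull M) -> mixture_majorizes.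
Proof.
move=> hull_maj; apply: mixture_majorizes_columnwise => w.
have M_hull : conv_hull M (M w).
  by exists (delta w); split=> [|y]; rewrite ?sum_delta //; exact: delta_prob.
have [p [[a [a_prob p_eq]] p_maj]] := hull_maj _ M_hull.
by exists a => //; apply: eq_majorizes p_maj.
Qed.

Lemma mixture_set_majorizes :
  mixture_majorizes -> set_majorizes (conv_hull N) (conv_hull M).
Proof.
move=> [S [S_ch S_maj]] q [b [b_prob q_eq]].
have a_prob := is_prob_mix b_prob S_ch.
exists (mixture (fun x => \sum_w b w * S w x)); split.
  by exists (fun x => \sum_w b w * S w x).
apply: eq_majorizes (fun y => erefl) (fun y => esym (q_eq y)) _.
have b_ge0 := b_prob.1; have S_ge0 w := (S_ch w).1.
move=> k k_range; rewrite kfnorm_mixture; last by case: a_prob.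
rewrite kfnorm_nonincreasing; last by apply: nonincreasing_mix.
rewrite prefix_sum_mix.
under [X in _ <= X]eq_bigr do rewrite mulr_suml.
rewrite exchange_big /=; apply: ler_sum => w _.
under [X in _ <= X]eq_bigr do rewrite -mulrA.
rewrite -mulr_sumr; apply: ler_wpM2l => //.
rewrite -(kfnorm_nonincreasing _ (M_dec w)) -kfnorm_mixture //.
exact: S_maj.
Qed.

Lemma mixture_max_dot : mixture_majorizes -> max_dot_dominates.
Proof.
move=> [S [S_ch S_maj]] s [[s_ge0 _] s_dec].
apply: bigmax_le => [|w _]; first exact: bigmax_ge_id.
have S_ge0 x : 0 <= S w x by case: (S_ch w).
apply: le_trans (_ : dotv s (mixture (S w)) <= _).
  apply: dot_le_of_prefix_sum_le => //.
  by apply/majorizesP; [exact: mixture_nonincreasing | exact: M_dec | exact: S_maj].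
by rewrite dotv_mixture; apply: mean_le_bigmax.
Qed.

Lemma max_dot_dominates_cone s : max_dot_dominates ->
  (forall i, 0 <= s i) -> nonincreasing s -> 0 < \sum_i s i ->
  \big[Num.max/0]_w dotv s (M w) <= \big[Num.max/0]_x dotv s (N x).
Proof.
move=> dom s_ge0 s_dec s_gt0; set sig := \sum_i s i.
have sig_ge0 : 0 <= sig^-1 by rewrite invr_ge0 ltW.
have scale p : dotv (fun i => s i / sig) p = sig^-1 * dotv s p.
  by rewrite /dotv mulr_sumr; apply: eq_bigr => i _; rewrite mulrAC mulrC.
have := dom (fun i => s i / sig); rewrite -!(eq_bigr _ (fun i _ => esym (scale _))).
rewrite -!mulr_bigmax // ler_pM2l ?invr_gt0 //; apply; split.
  exact: normalize_prob.
by move=> i j le_ij; apply: ler_wpM2r => //; apply: s_dec.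
Qed.

Lemma max_dot_kfnorm_ratio : max_dot_dominates -> kfnorm_ratio_ge1.
Proof.
move=> dom t w [t_ge0 t_sum1].
have Mw_gt0 (j : 'I_n) : 0 < prefix_sum (M w) j.+1 by exact: prefix_sum_prob_gt0.
pose r j := t j / prefix_sum (M w) j.+1.
have r_ge0 j : 0 <= r j by apply: divr_ge0 => //; apply: ltW.
pose s (i : 'I_n) := \sum_(j : 'I_n | (i <= j)%N) r j.
have s_ge0 i : 0 <= s i by apply: sumr_ge0.
have dot_Mw : dotv s (M w) = 1.
  rewrite dotv_tail_sum -t_sum1; apply: eq_bigr => j _.
  by rewrite /r divfK // lt0r_neq0.
have dot_N x : dotv s (N x) = \sum_k t k * (kfnorm (N x) k.+1 / kfnorm (M w) k.+1).
  rewrite dotv_tail_sum; apply: eq_bigr => j _.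
  rewrite (kfnorm_nonincreasing _ (N_dec x)) (kfnorm_nonincreasing _ (M_dec w)).
  by rewrite /r mulrAC mulrA.
have s_gt0 : 0 < \sum_i s i.
  apply: lt_le_trans ltr01 _; rewrite -dot_Mw; apply: ler_sum => i _.
  by apply: ler_piMr => //; apply: prob_le1.
have := max_dot_dominates_cone dom s_ge0 (tail_sum_nonincreasing r_ge0) s_gt0.
rewrite (eq_bigr _ (fun x _ => dot_N x)); apply: le_trans.
by rewrite -dot_Mw; apply: le_bigmax.
Qed.

Lemma kfnorm_ratio_mixture : kfnorm_ratio_ge1 -> mixture_majorizes.
Proof.
move=> ratio_ge1; apply: mixture_majorizes_columnwise => w.
have Mw_gt0 (k : 'I_n) : 0 < kfnorm (M w) k.+1.
  by rewrite kfnorm_nonincreasing //; apply: prefix_sum_prob_gt0.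
have x0 : 'I_m.
  case: (pickP (xpredT : pred 'I_m)) => [x0 _ //|none]; exfalso.
  by have := ratio_ge1 _ w (M_ch w); rewrite big_pred0 // ler10.
pose a (i : 'I_n) x := kfnorm (N x) i.+1 / kfnorm (M w) i.+1 - 1.
have [[c c_prob c_ge]|[t t_prob t_lt]] := ville_alternative a x0.
  have c_ge0 := c_prob.1; exists c => //.
  move=> [//|k] /andP [_ lt_kn]; rewrite kfnorm_mixture //.
  have := c_ge (Ordinal lt_kn); under eq_bigr do rewrite mulrBr mulr1.
  rewrite sumrB (proj2 c_prob) subr_ge0; under eq_bigr do rewrite mulrA.
  by rewrite -mulr_suml ler_pdivlMr ?mul1r //; apply: (Mw_gt0 (Ordinal lt_kn)).
exfalso; have := ratio_ge1 t w t_prob; rewrite leNgt => /negP; apply.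
apply: bigmax_lt => [|x _]; first exact: ltr01.
by have := t_lt x; under eq_bigr do rewrite mulrBr mulr1; rewrite sumrB (proj2 t_prob) subr_lt0.
Qed.

End ChannelMajorization.

Theorem theorem8 (R : realType) (m m' n : nat)
  (N : 'I_m -> 'I_n -> R) (M : 'I_m' -> 'I_n -> R) :
  is_channel N -> is_channel M ->
  (forall x, nonincreasing (N x)) -> (forall w, nonincreasing (M w)) ->
  [<-> channel_majorizes N M;
       set_majorizes (conv_hull N) (conv_hull M);
       exists S : 'I_m' -> 'I_m -> R, is_channel S /\
         (forall w, majorizes (fun y => \sum_(x < m) S w x * N x y) (M w));
       forall s : 'I_n -> R, is_prob_dec s ->
         \big[Num.max/0]_(x < m) dotv s (N x) >= \big[Num.max/0]_(w < m') dotv s (M w);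
       forall (t : 'I_n -> R) (w : 'I_m'), is_prob t ->
         \big[Num.max/0]_(x < m)
            (\sum_(k < n) t k * (kfnorm (N x) k.+1 / kfnorm (M w) k.+1)) >= 1].
Proof.
move=> N_ch M_ch N_dec M_dec; tfae=> H.
- by apply: mixture_set_majorizes => //; apply: channel_majorizes_mixture.
- exact: set_majorizes_mixture.
- exact: mixture_max_dot.
- exact: max_dot_kfnorm_ratio.
- by apply: mixture_channel_majorizes => //; apply: kfnorm_ratio_mixture.
Qed.
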